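(* Let $\mathcal H$ be an obstruction design of type $\lambda\vdash_n d$. Then $f_{\mathcal H}(w)=0$ for every tensor $w\in\bigotimes^3\mathbb C^n$ whose border rank satisfies $\underline R(w)<\chi'(\mathcal H)$.
   Context: Notation: $[d]=\{1,\dots,d\}$. A partition $\lambda$ is a finite nonincreasing sequence of natural numbers; $|\lambda|=\sum_i\lambda_i$, $\ell(\lambda)$ is the number of nonzero parts, and $\lambda^t$ is the transposed partition. For a triple $\lambda=(\lambda^{(1)},\lambda^{(2)},\lambda^{(3)})$ of partitions, $\lambda\vdash_n d$ means $|\lambda^{(k)}|=d$ and $\ell(\lambda^{(k)})\le n$ for $k=1,2,3$. An obstruction design is a finite subset $\mathcal H\subseteq[\ell_1]\times[\ell_2]\times[\ell_3]$. For $k\in\{1,2,3\}$ the $k$-slices of $\mathcal H$ are the nonempty sets $\{x\in\mathcal H:x_k=i\}$, $i\in[\ell_k]$; they form a set partition $E^{(k)}$ of $\mathcal H$. If $\mu^{(k)}$ is the partition obtained by sorting the slice sizes nonincreasingly, the type of $\mathcal H$ is $(\lambda^{(1)},\lambda^{(2)},\lambda^{(3)})$ with $\lambda^{(k)}=(\mu^{(k)})^t$. Definition of $f_{\mathcal H}$: for a finite totally ordered set $S$, a map $J:S\to\mathbb C^n$ and $e\subseteq S$ with $|e|\le n$, $\det J|_e$ is the determinant of the $|e|\times|e|$ matrix whose columns are the vectors $J(s)$, $s\in e$, in increasing order, truncated to their first $|e|$ coordinates. For an obstruction design $\mathcal H$ of type $\lambda\vdash_n d$ with a fixed total order, and a triple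 labeling $J=(J^{(1)},J^{(2)},J^{(3)}):\mathcal H\to(\mathbb C^n)^3$, set $\mathrm{eval}_{\mathcal H}(J)=\prod_{k=1}^3\prod_{e\in E^{(k)}}\det J^{(k)}|_e$. For $w=\sum_{i=1}^r u^{(1)}_i\otimes u^{(2)}_i\otimes u^{(3)}_i\in\bigotimes^3\mathbb C^n$ define $f_{\mathcal H}(w)=\sum_{I:\mathcal H\to[r]}\mathrm{eval}_{\mathcal H}(J_I)$ where $J_I^{(k)}(s)=u^{(k)}_{I(s)}$; this is a well-defined homogeneous polynomial of degree $d$ on $\bigotimes^3\mathbb C^n$. The rank $R(w)$ of $w\in\bigotimes^3\mathbb C^n$ is the least $r$ such that $w$ is a sum of $r$ tensors $u\otimes v\otimes x$; the border rank $\underline R(w)$ is the least $r$ such that $w$ is a limit of tensors of rank at most $r$. A proper coloring of $\mathcal H$ with $c$ colors is a map $\sigma:\mathcal H\to[c]$ that is injective on every slice (of each of the three directions); the chromatic index $\chi'(\mathcal H)$ is the least $c$ admitting a proper coloring. *)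

From HB Require Import structures.
From mathcomp Require Import all_boot all_order all_algebra.
Set Implicit Arguments. Unset Strict Implicit. Unset Printing Implicit Defensive.
Import Order.TTheory GRing.Theory Num.Theory.

(* Ambient index type of an obstruction design: [l1] x [l2] x [l3],
   encoded 0-based as 'I_l1 * 'I_l2 * 'I_l3. *)
Definition cube (l1 l2 l3 : nat) : finType := ('I_l1 * 'I_l2 * 'I_l3)%type.

Section Designs.
Variables l1 l2 l3 : nat.
Local Notation T := (cube l1 l2 l3).

Definition proj1 (x : T) : 'I_l1 := x.1.1.
Definition proj2 (x : T) : 'I_l2 := x.1.2.
Definition proj3 (x : T) : 'I_l3 := x.2.

Definition slices (I : finType) (p : T -> I) (H : {set T}) : seq {set T} :=
  [seq [set x in H | p x == i] | i <- enum I & [exists x in H, p x == i]].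

Definition part_size (la : seq nat) : nat := sumn la.
Definition part_length (la : seq nat) : nat := count (fun m => 0 < m) la.
Definition part_transpose (mu : seq nat) : seq nat :=
  [seq count (fun m => j < m) mu | j <- iota 0 (\max_(m <- mu) m)].

Definition slice_sizes (I : finType) (p : T -> I) (H : {set T}) : seq nat :=
  sort geq [seq #|(e : {set T})| | e <- slices p H].

Definition type_comp (I : finType) (p : T -> I) (H : {set T}) : seq nat :=
  part_transpose (slice_sizes p H).

Definition has_type_n (n d : nat) (H : {set T}) : Prop :=
  [/\ part_size (type_comp proj1 H) = d /\ part_length (type_comp proj1 H) <= n,
      part_size (type_comp proj2 H) = d /\ part_length (type_comp proj2 H) <= n &
      part_size (type_comp proj3 H) = d /\ part_length (type_comp proj3 H) <= n].

Definition proper_coloring (H : {set T}) (c : nat) (sigma : T -> nat) : Prop :=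
  (forall x, x \in H -> sigma x < c) /\
  (forall x y, x \in H -> y \in H -> x != y ->
     (proj1 x = proj1 y \/ proj2 x = proj2 y \/ proj3 x = proj3 y) ->
     sigma x <> sigma y).
Definition colorable (H : {set T}) (c : nat) : Prop :=
  exists sigma, proper_coloring H c sigma.
Definition is_chromatic_index (H : {set T}) (c : nat) : Prop :=
  colorable H c /\ forall c', colorable H c' -> c <= c'.

Local Open Scope ring_scope.

(* i-th coordinate (0-based) of a vector in C^n, 0 beyond n *)
Definition coord (C : nzRingType) (n : nat) (v : 'I_n -> C) (i : nat) : C :=
  if insub i is Some j then v j else 0.

(* det J|_e : columns J(s), s in e in increasing order, truncated to the
   first |e| coordinates; [s] is e listed in increasing order. *)
Definition sdet (C : comNzRingType) (n : nat) (J : T -> 'I_n -> C) (s : seq T) : C :=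
  \det (\matrix_(i < size s, j < size s) coord (J (tnth (in_tuple s) j)) i).

Definition ordered (ord : seq T) (e : {set T}) : seq T := [seq x <- ord | x \in e].

Definition eval_H (C : comNzRingType) (n : nat) (ord : seq T) (H : {set T})
  (J1 J2 J3 : T -> 'I_n -> C) : C :=
  (\prod_(e <- slices proj1 H) sdet J1 (ordered ord e)) *
  (\prod_(e <- slices proj2 H) sdet J2 (ordered ord e)) *
  (\prod_(e <- slices proj3 H) sdet J3 (ordered ord e)).

Definition Hsub (H : {set T}) : finType := {x : T | x \in H}.

Definition label (C : comNzRingType) (n : nat) (H : {set T}) (R : finType)
  (u : R -> 'I_n -> C) (I : {ffun Hsub H -> R}) (x : T) : 'I_n -> C :=
  if (insub x : option (Hsub H)) is Some y then u (I y) else (fun _ => 0).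

(* f_H evaluated on the decomposition w = sum_{r in R} u r (x) v r (x) x r *)
Definition fH_dec (C : comNzRingType) (n : nat) (ord : seq T) (H : {set T})
  (R : finType) (u v x : R -> 'I_n -> C) : C :=
  \sum_(I : {ffun Hsub H -> R})
     eval_H ord H (label u I) (label v I) (label x I).

End Designs.

Local Open Scope ring_scope.

Definition tensor (C : Type) (n : nat) := 'I_n -> 'I_n -> 'I_n -> C.

(* f_H(w), computed on the standard decomposition
   w = sum_{a,b,c} (w_abc e_a) (x) e_b (x) e_c *)
Definition std_u (C : nzRingType) n (w : tensor C n) (r : 'I_n * 'I_n * 'I_n) : 'I_n -> C :=
  fun i => if i == r.1.1 then w r.1.1 r.1.2 r.2 else 0.
Definition std_v (C : nzRingType) n (r : 'I_n * 'I_n * 'I_n) : 'I_n -> C :=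
  fun i => (i == r.1.2)%:R.
Definition std_x (C : nzRingType) n (r : 'I_n * 'I_n * 'I_n) : 'I_n -> C :=
  fun i => (i == r.2)%:R.

Definition fH (C : comNzRingType) (l1 l2 l3 n : nat) (ord : seq (cube l1 l2 l3))
  (H : {set cube l1 l2 l3}) (w : tensor C n) : C :=
  fH_dec ord H (std_u w) (@std_v C n) (@std_x C n).

Definition rank_le (C : nzRingType) n (w : tensor C n) (r : nat) : Prop :=
  exists u v x : 'I_r -> 'I_n -> C,
    forall a b c, w a b c = \sum_(i < r) u i a * v i b * x i c.

Definition border_rank_le (C : numDomainType) n (w : tensor C n) (r : nat) : Prop :=
  forall eps : C, 0 < eps ->
    exists w' : tensor C n, rank_le w' r /\
      forall a b c, `|w' a b c - w a b c| < eps.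

Definition is_border_rank (C : numDomainType) n (w : tensor C n) (r : nat) : Prop :=
  border_rank_le w r /\ forall r', border_rank_le w r' -> (r <= r')%N.

From Pilot Require Import Defs.
From HB Require Import structures.
From mathcomp Require Import all_boot all_order all_algebra.
From mathcomp Require Import ring perm.
Import Order.TTheory GRing.Theory Num.Theory.

(* By the Leibniz formula each determinant det J|_e is a form in
      the labels J(s), s in e, of degree one in each; since the slices in one
      direction partition H, the product of the determinants of those slices
      is multilinear in the labels of all points of H.  Multiplying the three
      directions and summing over assignments I : H -> [r] shows that f_H
      evaluated on a decomposition w = sum_i u_i (x) v_i (x) x_i is a fixed
      polynomial in the entries of w (fH_expansion); in particular f_H is well
      defined (fH_decomposes).
   2. Combinatorics.  On a decomposition with r summands, a nonzero term of
      f_H is a proper r-coloring of H, since two points of one slice with the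
      same label give a determinant with two equal columns.  So f_H vanishes
      on tensors of rank r < chi'(H) (fH_rank_eq0).
   3. Continuity.  Polynomials in the entries are locally Lipschitz, hence
      vanish on the closure of their zero set (lipschitz_eq0); tensors of
      border rank r are limits of tensors of rank r. *)
Set Implicit Arguments. Unset Strict Implicit. Unset Printing Implicit Defensive.
Local Open Scope ring_scope.

Section PolynomialForms.
Variables (C : comNzRingType) (l1 l2 l3 n : nat).
Local Notation T := (cube l1 l2 l3).
Variable H : {set T}.
Local Notation HS := (Hsub H).

Definition monomial (J : T -> 'I_n -> C) (rho : HS -> seq nat) : C :=
  \prod_(s : HS) \prod_(p <- rho s) Defs.coord (J (val s)) p.

Definition poly_form (m : HS -> nat) (F : (T -> 'I_n -> C) -> C) : Prop :=
  exists (L : finType) (k : L -> C) (rho : L -> HS -> seq nat),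
    (forall t s, size (rho t s) = m s) /\
    forall J, F J = \sum_(t : L) k t * monomial J (rho t).

Lemma poly_form_ext m m' F F' : m =1 m' -> F =1 F' ->
  poly_form m F -> poly_form m' F'.
Proof.
move=> em eF [L [k [rho [hsize hF]]]]; exists L, k, rho; split.
  by move=> t s; rewrite hsize em.
by move=> J; rewrite -eF hF.
Qed.

Lemma poly_form_one : poly_form (fun _ => 0%N) (fun _ => 1).
Proof.
exists 'I_1, (fun _ => 1), (fun _ _ => [::]); split=> // J.
by rewrite big_ord1 mul1r /monomial big1 // => s _; rewrite big_nil.
Qed.

Lemma poly_form_mul m1 m2 F G : poly_form m1 F -> poly_form m2 G ->
  poly_form (fun s => m1 s + m2 s)%N (fun J => F J * G J).
Proof.
move=> [L1 [k1 [rho1 [hs1 hF]]]] [L2 [k2 [rho2 [hs2 hG]]]].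
exists (L1 * L2)%type, (fun t => k1 t.1 * k2 t.2),
  (fun t s => rho1 t.1 s ++ rho2 t.2 s); split.
  by move=> t s; rewrite size_cat hs1 hs2.
move=> J; rewrite hF hG big_distrlr /= pair_big /=; apply: eq_bigr => t _.
rewrite /monomial; under [in RHS]eq_bigr => s _ do rewrite big_cat.
by rewrite big_split /=; ring.
Qed.

Lemma poly_form_prod (X : Type) (r : seq X) (m : X -> HS -> nat)
    (F : X -> (T -> 'I_n -> C) -> C) :
  (forall e, poly_form (m e) (F e)) ->
  poly_form (fun s => \sum_(e <- r) m e s)%N (fun J => \prod_(e <- r) F e J).
Proof.
move=> hF; elim: r => [|e r IH].
  by apply: poly_form_ext poly_form_one => [s|J]; rewrite big_nil.
by apply: poly_form_ext (poly_form_mul (hF e) IH) => [s|J]; rewrite big_cons.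
Qed.

Lemma prod_by_fibres m (g : 'I_m -> T) (F : 'I_m -> C) : (forall i, g i \in H) ->
  \prod_(s : HS) \prod_(i | g i == val s) F i = \prod_i F i.
Proof.
move=> gH; rewrite (exchange_big_dep xpredT) //=; apply: eq_bigr => i _.
by rewrite (big_pred1 (Sub (g i) (gH i) : HS)) // => s /=; rewrite eq_sym -val_eqE.
Qed.

Lemma sdet_poly_form (s : seq T) : all (mem H) s ->
  poly_form (fun y => count_mem (val y) s) (fun J => sdet J s).
Proof.
move=> sH; pose m := size s; pose g := tnth (in_tuple s).
have gH i : g i \in H by apply: (allP sH); apply: mem_tnth.
exists {perm 'I_m}, (fun sg : {perm 'I_m} => (-1) ^+ odd_perm sg),
  (fun (sg : {perm 'I_m}) (y : HS) =>
     [seq (sg i : nat) | i <- index_enum 'I_m & g i == val y]); split.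
  move=> sg y; rewrite size_map size_filter.
  have -> : index_enum 'I_m = enum 'I_m by rewrite enumT /index_enum locked_withE.
  by rewrite -[in RHS](_ : [seq g i | i <- enum 'I_m] = s) ?count_map ?map_tnth_enum.
move=> J; rewrite /sdet -det_tr /determinant; apply: eq_bigr => sg _.
congr (_ * _); transitivity (\prod_i Defs.coord (J (g i)) (sg i)).
  by apply: eq_bigr => i _; rewrite !mxE.
rewrite -(prod_by_fibres _ gH); apply: eq_bigr => y _; rewrite big_map big_filter.
by apply: eq_bigr => i /eqP <-.
Qed.

Definition multilinear (F : (T -> 'I_n -> C) -> C) : Prop :=
  exists (L : finType) (k : L -> C) (rho : L -> HS -> nat),
    forall J, F J = \sum_(t : L) k t * \prod_(s : HS) Defs.coord (J (val s)) (rho t s).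

Lemma poly_form_multilinear F : poly_form (fun _ => 1%N) F -> multilinear F.
Proof.
move=> [L [k [rho [hsize hF]]]]; exists L, k, (fun t s => head 0%N (rho t s)).
move=> J; rewrite hF; apply: eq_bigr => t _; congr (_ * _); apply: eq_bigr => s _.
by case: (rho t s) (hsize t s) => [|p [|]] //= _; rewrite big_seq1.
Qed.

End PolynomialForms.

Lemma mul_sum3 (R : comNzRingType) (A B D : finType)
    (f : A -> R) (g : B -> R) (h : D -> R) :
  (\sum_a f a) * (\sum_b g b) * (\sum_c h c) =
  \sum_(t : A * B * D) f t.1.1 * g t.1.2 * h t.2.
Proof.
rewrite big_distrlr big_distrl; under eq_bigr do rewrite big_distrl.
by rewrite pair_big; under eq_bigr do rewrite big_distrr; rewrite pair_big.
Qed.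

Section Tensors.
Variables (C : comNzRingType) (n : nat).

Definition decomposes (R : finType) (u v x : R -> 'I_n -> C) (w : tensor C n) : Prop :=
  forall a b c, w a b c = \sum_(i : R) u i a * v i b * x i c.

Definition tensor_entry (w : tensor C n) (p q r : nat) : C :=
  match insub p, insub q, insub r with
  | Some a, Some b, Some c => w a b c
  | _, _, _ => 0
  end.

Definition decomp_entry (R : finType) (u v x : R -> 'I_n -> C) (p q r : nat) : C :=
  \sum_(i : R) Defs.coord (u i) p * Defs.coord (v i) q * Defs.coord (x i) r.

Lemma decomp_entryE (R : finType) (u v x : R -> 'I_n -> C) (w : tensor C n) :
  decomposes u v x w -> forall p q r, decomp_entry u v x p q r = tensor_entry w p q r.
Proof.
move=> dec_w p q r; rewrite /decomp_entry /tensor_entry /Defs.coord.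
case: insub => [a|]; case: insub => [b|]; case: insub => [c|];
  by rewrite ?dec_w // big1 // => i _; rewrite ?mulr0 ?mul0r.
Qed.

Lemma std_decomposes (w : tensor C n) :
  decomposes (std_u w) (@std_v C n) (@std_x C n) w.
Proof.
move=> a b c; rewrite (bigD1 (a, b, c)) //= big1 ?addr0.
  by rewrite /std_u /std_v /std_x /= !eqxx !mulr1.
move=> [[a' b'] c'] /=; rewrite /std_u /std_v /std_x /=.
case: (a =P a') => [<-|]; last by rewrite mul0r mul0r.
case: (b =P b') => [<-|]; last by rewrite mulr0 mul0r.
by case: (c =P c') => [<-|]; rewrite ?eqxx ?mulr0.
Qed.

End Tensors.

Section Designs.
Variables (C : comNzRingType) (l1 l2 l3 n : nat).
Local Notation T := (cube l1 l2 l3).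
Variables (H : {set T}) (ord : seq T).
Local Notation HS := (Hsub H).
Hypothesis ord_H : perm_eq ord (enum H).

Lemma mem_ord x : (x \in ord) = (x \in H).
Proof. by rewrite (perm_mem ord_H) mem_enum. Qed.

Lemma ordered_in_H (e : {set T}) : all (mem H) (ordered ord e).
Proof. by apply/allP => x; rewrite mem_filter mem_ord => /andP []. Qed.

Lemma count_ordered (e : {set T}) (s : HS) :
  count_mem (val s) (ordered ord e) = (val s \in e).
Proof.
have ord_uniq : uniq ord by rewrite (perm_uniq ord_H) enum_uniq.
rewrite count_uniq_mem ?filter_uniq //.
by rewrite mem_filter mem_ord (valP s) andbT.
Qed.

Lemma slices_cover (I : finType) (p : T -> I) (s : HS) :
  (\sum_(e <- slices p H) (val s \in e))%N = 1%N.
Proof.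
rewrite /slices big_map big_filter big_mkcond.
rewrite (bigD1_seq (p (val s))) ?mem_enum ?enum_uniq //=.
rewrite inE (valP s) eqxx big1 ?addn0 => [|i ne_i].
  by case: existsP => // -[]; exists (val s); rewrite (valP s) eqxx.
by rewrite inE (valP s) eq_sym (negbTE ne_i) /=; case: ifP.
Qed.

Definition slice_product (I : finType) (p : T -> I) (J : T -> 'I_n -> C) : C :=
  \prod_(e <- slices p H) sdet J (ordered ord e).

(* Each point of H lies in exactly one slice, so the slice product is
   linear in the label of every point. *)
Lemma slice_product_multilinear (I : finType) (p : T -> I) :
  multilinear H (slice_product p).
Proof.
apply: poly_form_multilinear.
have := poly_form_prod (slices p H) (fun e => sdet_poly_form C n (ordered_in_H e)).
apply: poly_form_ext => // s.
by rewrite -(slices_cover p s); apply: eq_bigr => e _; rewrite count_ordered.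
Qed.

Lemma fH_dec_expansion : exists (L : finType) (k : L -> C) (i1 i2 i3 : L -> HS -> nat),
  forall (R : finType) (u v x : R -> 'I_n -> C),
  fH_dec ord H u v x =
    \sum_(t : L) k t * \prod_(s : HS) decomp_entry u v x (i1 t s) (i2 t s) (i3 t s).
Proof.
have [L1 [k1 [r1 e1]]] := slice_product_multilinear (@proj1 l1 l2 l3).
have [L2 [k2 [r2 e2]]] := slice_product_multilinear (@proj2 l1 l2 l3).
have [L3 [k3 [r3 e3]]] := slice_product_multilinear (@proj3 l1 l2 l3).
exists (L1 * L2 * L3)%type, (fun t => k1 t.1.1 * k2 t.1.2 * k3 t.2),
  (fun t => r1 t.1.1), (fun t => r2 t.1.2), (fun t => r3 t.2) => R u v x.
have labelE (y : R -> 'I_n -> C) (I : {ffun HS -> R}) (f : HS -> nat) :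
    \prod_s Defs.coord (label y I (val s)) (f s) = \prod_s Defs.coord (y (I s)) (f s).
  by apply: eq_bigr => s _; rewrite /label valK.
rewrite /fH_dec /eval_H.
under eq_bigr => I _ do rewrite -!/(slice_product _ _) e1 e2 e3 mul_sum3.
rewrite exchange_big; apply: eq_bigr => t _.
rewrite /decomp_entry bigA_distr_bigA mulr_sumr; apply: eq_bigr => I _ /=.
by rewrite !big_split /= !labelE; ring.
Qed.

Lemma fH_expansion : exists (L : finType) (k : L -> C) (i1 i2 i3 : L -> HS -> nat),
  forall w : tensor C n,
  fH ord H w = \sum_(t : L) k t * \prod_(s : HS) tensor_entry w (i1 t s) (i2 t s) (i3 t s).
Proof.
have [L [k [i1 [i2 [i3 E]]]]] := fH_dec_expansion.
exists L, k, i1, i2, i3 => w; rewrite /fH E.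
by under eq_bigr do under eq_bigr do rewrite (decomp_entryE (std_decomposes w)).
Qed.

Lemma fH_decomposes (R : finType) (u v x : R -> 'I_n -> C) (w : tensor C n) :
  decomposes u v x w -> fH_dec ord H u v x = fH ord H w.
Proof.
move=> dec_w; have [L [k [i1 [i2 [i3 E]]]]] := fH_dec_expansion.
rewrite /fH !E; apply: eq_bigr => t _; congr (_ * _); apply: eq_bigr => s _.
by rewrite (decomp_entryE dec_w) (decomp_entryE (std_decomposes w)).
Qed.

Lemma sdet_eq0 (J : T -> 'I_n -> C) (e : seq T) x y :
  x \in e -> y \in e -> x != y -> J x = J y -> sdet J e = 0.
Proof.
move=> xe ye ne_xy eJ.
have ix : (index x e < size e)%N by rewrite index_mem.
have iy : (index y e < size e)%N by rewrite index_mem.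
rewrite /sdet -det_tr; apply: (@determinant_alternate _ _ _ (Ordinal ix) (Ordinal iy)).
  apply: contra ne_xy => /eqP [] eq_ixy.
  by rewrite -(nth_index x xe) eq_ixy nth_index.
by move=> i; rewrite !mxE !(tnth_nth x) /= !nth_index // eJ.
Qed.

Lemma slice_product_eq0 (I : finType) (p : T -> I) (J : T -> 'I_n -> C) x y :
  x \in H -> y \in H -> x != y -> p x = p y -> J x = J y -> slice_product p J = 0.
Proof.
move=> xH yH ne_xy pxy eJ; pose e := [set z in H | p z == p x].
have e_slice : e \in slices p H.
  apply/mapP; exists (p x) => //; rewrite mem_filter mem_enum andbT.
  by apply/existsP; exists x; rewrite xH eqxx.
rewrite /slice_product (big_rem e e_slice) /= (@sdet_eq0 _ _ x y) ?mul0r //.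
  by rewrite mem_filter !inE xH eqxx mem_ord.
by rewrite mem_filter !inE yH pxy eqxx mem_ord.
Qed.

Definition assignment_coloring (r : nat) (I : {ffun HS -> 'I_r}) (z : T) : nat :=
  if insub z is Some s then nat_of_ord (I s) else 0%N.

(* A nonzero term of f_H on a decomposition with r summands is a proper
   coloring of H with r colors: points sharing a slice must get different
   summands, else two columns of a determinant coincide. *)
Lemma assignment_coloring_proper (r : nat) (u v x : 'I_r -> 'I_n -> C)
    (I : {ffun HS -> 'I_r}) :
  eval_H ord H (label u I) (label v I) (label x I) != 0 ->
  proper_coloring H r (assignment_coloring I).
Proof.
move=> eval_neq0; split=> [z zH|y z yH zH ne_yz share_slice same_color].
  by rewrite /assignment_coloring (insubT (mem H) zH).
have same_label (f : 'I_r -> 'I_n -> C) : label f I y = label f I z.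
  move: same_color; rewrite /assignment_coloring /label.
  by rewrite (insubT (mem H) yH) (insubT (mem H) zH) => /val_inj ->.
move: eval_neq0; rewrite /eval_H -!/(slice_product _ _).
case: share_slice => [p_yz|[p_yz|p_yz]];
  by rewrite (slice_product_eq0 yH zH ne_yz p_yz (same_label _)) ?mul0r ?mulr0 ?mul0r eqxx.
Qed.

Lemma fH_rank_eq0 (w : tensor C n) (r : nat) :
  rank_le w r -> ~ colorable H r -> fH ord H w = 0.
Proof.
move=> [u [v [x dec_w]]] not_col; rewrite -(fH_decomposes dec_w).
apply: big1 => I _; apply/eqP/negPn/negP => eval_neq0.
by apply: not_col; exists (assignment_coloring I); apply: assignment_coloring_proper eval_neq0.
Qed.

End Designs.

Section Continuity.
Variables (C : numFieldType) (n : nat) (w0 : tensor C n).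

Definition lipschitz_at (F : tensor C n -> C) : Prop :=
  exists K : C, 0 <= K /\ forall w d, 0 < d -> d <= 1 ->
    (forall a b c, `|w a b c - w0 a b c| <= d) -> `|F w - F w0| <= K * d.

Lemma lipschitz_ext F G : F =1 G -> lipschitz_at F -> lipschitz_at G.
Proof.
move=> eFG [K [K_ge0 hF]]; exists K; split=> // w d d_gt0 d_le1 near_w.
by rewrite -!eFG; apply: hF.
Qed.

Lemma lipschitz_const c : lipschitz_at (fun _ => c).
Proof. by exists 0; split=> // w d _ _ _; rewrite subrr normr0 mul0r. Qed.

Lemma lipschitz_entry p q r : lipschitz_at (fun w => tensor_entry w p q r).
Proof.
rewrite /tensor_entry; case: (insub p : option 'I_n) => [a|];
  case: (insub q : option 'I_n) => [b|]; case: (insub r : option 'I_n) => [c|];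
  try exact: lipschitz_const.
by exists 1; split=> // w d _ _ near_w; rewrite mul1r.
Qed.

Lemma lipschitz_add F G : lipschitz_at F -> lipschitz_at G ->
  lipschitz_at (fun w => F w + G w).
Proof.
move=> [KF [KF_ge0 hF]] [KG [KG_ge0 hG]]; exists (KF + KG).
split=> [|w d d_gt0 d_le1 near_w]; first exact: addr_ge0.
rewrite opprD addrACA mulrDl; apply: le_trans (ler_normD _ _) _.
by apply: lerD; [apply: hF | apply: hG].
Qed.

Lemma lipschitz_mul F G : lipschitz_at F -> lipschitz_at G ->
  lipschitz_at (fun w => F w * G w).
Proof.
move=> [KF [KF_ge0 hF]] [KG [KG_ge0 hG]].
exists (KF * (`|G w0| + KG) + `|F w0| * KG); split.
  by rewrite addr_ge0 ?mulr_ge0 ?addr_ge0.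
move=> w d d_gt0 d_le1 near_w.
have -> : F w * G w - F w0 * G w0 = (F w - F w0) * G w + F w0 * (G w - G w0) by ring.
have G_bound : `|G w| <= `|G w0| + KG.
  rewrite -[G w](subrK (G w0)) addrC; apply: le_trans (ler_normD _ _) _.
  rewrite lerD2l; apply: le_trans (hG w d d_gt0 d_le1 near_w) _; exact: ler_piMr.
apply: le_trans (ler_normD _ _) _; rewrite !normrM.
rewrite [X in _ <= X](_ : _ = KF * d * (`|G w0| + KG) + `|F w0| * (KG * d)); last by ring.
apply: lerD; first by apply: ler_pM => //; apply: hF.
by apply: ler_wpM2l => //; apply: hG.
Qed.

Lemma lipschitz_sum (X : Type) (r : seq X) (F : X -> tensor C n -> C) :
  (forall i, lipschitz_at (F i)) -> lipschitz_at (fun w => \sum_(i <- r) F i w).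
Proof.
move=> hF; elim: r => [|i r IH].
  by apply: lipschitz_ext (lipschitz_const 0) => w; rewrite big_nil.
by apply: lipschitz_ext (lipschitz_add (hF i) IH) => w; rewrite big_cons.
Qed.

Lemma lipschitz_prod (X : Type) (r : seq X) (F : X -> tensor C n -> C) :
  (forall i, lipschitz_at (F i)) -> lipschitz_at (fun w => \prod_(i <- r) F i w).
Proof.
move=> hF; elim: r => [|i r IH].
  by apply: lipschitz_ext (lipschitz_const 1) => w; rewrite big_nil.
by apply: lipschitz_ext (lipschitz_mul (hF i) IH) => w; rewrite big_cons.
Qed.

Lemma lipschitz_eq0 (F : tensor C n -> C) : lipschitz_at F ->
  (forall eps, 0 < eps -> exists w, (forall a b c, `|w a b c - w0 a b c| < eps) /\ F w = 0) ->
  F w0 = 0.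
Proof.
move=> [K [K_ge0 hF]] approx; apply/eqP; apply: contraT => Fw0_neq0.
have t_gt0 : 0 < `|F w0| by rewrite normr_gt0.
set t := `|F w0| in t_gt0; pose d := t / (K + t + 1).
have den_gt0 : 0 < K + t + 1 by rewrite -addrA ltr_wpDl // ltr_wpDr.
have d_gt0 : 0 < d by rewrite divr_gt0.
have d_le1 : d <= 1 by rewrite ler_pdivrMr // mul1r (addrC K) -addrA lerDl addr_ge0.
have Kd_lt_t : K * d < t.
  rewrite mulrA ltr_pdivrMr // -subr_gt0.
  by rewrite (_ : _ - _ = t * (t + 1)); [rewrite mulr_gt0 ?addr_gt0 | ring].
have [w [near_w Fw0]] := approx d d_gt0.
have := hF w d d_gt0 d_le1 (fun a b c => ltW (near_w a b c)).
by rewrite Fw0 sub0r normrN -/t => /le_lt_trans /(_ Kd_lt_t); rewrite ltxx.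
Qed.

End Continuity.

(* Being a polynomial in the entries, f_H is Lipschitz at every tensor. *)
Lemma fH_lipschitz (C : numFieldType) (l1 l2 l3 n : nat)
    (H : {set cube l1 l2 l3}) (ord : seq (cube l1 l2 l3)) (w0 : tensor C n) :
  perm_eq ord (enum H) -> lipschitz_at w0 (fH ord H).
Proof.
move=> ord_H; have [L [k [i1 [i2 [i3 E]]]]] := fH_expansion C n ord_H.
apply: lipschitz_ext (fun w => esym (E w)) _.
apply: lipschitz_sum => t; apply: lipschitz_mul; first exact: lipschitz_const.
by apply: lipschitz_prod => s; apply: lipschitz_entry.
Qed.

Unset Implicit Arguments.
Theorem proposition4p2 (C : numClosedFieldType) (l1 l2 l3 n d : nat)
  (H : {set cube l1 l2 l3}) (ord : seq (cube l1 l2 l3)) :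
  perm_eq ord (enum H) ->
  has_type_n n d H ->
  forall (w : tensor C n) (r c : nat),
    is_border_rank w r -> is_chromatic_index H c -> (r < c)%N ->
    fH ord H w = 0%R.
Proof.
move=> ord_H _ w r c [approx_w _] [_ c_min] r_lt_c.
have not_colorable : ~ colorable H r by move=> /c_min; rewrite leqNgt r_lt_c.
apply: (lipschitz_eq0 (fH_lipschitz w ord_H)) => eps eps_gt0.
have [w' [rank_w' near_w']] := approx_w eps eps_gt0.
by exists w'; split=> //; exact: (fH_rank_eq0 ord_H rank_w' not_colorable).
Qed.
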